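(* Let $n\ge 2$, $k\ge 0$ and $\nu_1,\ldots,\nu_n>0$. The set of polynomials \[ \psi_{j_1,\ldots,j_{n-1}} = CK_{n}\Big( \big(K_+^{[n-1]}\big)^{j_{n-1}} CK_{n-1}\Big( \cdots \big(K_+^{[3]}\big)^{j_3} CK_{3}\Big( \big(K_+^{[2]}\big)^{j_2} CK_{2}\big( x_1^{j_1}\big)\Big)\cdots\Big)\Big), \] where $(j_1,\ldots,j_{n-1})$ ranges over all tuples of nonnegative integers with $\sum_{\ell=1}^{n-1} j_\ell = k$, is a basis of $\mathcal{H}_k(\mathbb{R}^n)$.
   Context: For $m\ge 1$, $\mathcal{P}_k(\mathbb{R}^m)$ denotes the space of real homogeneous polynomials of degree $k$ in $x_1,\ldots,x_m$. For $m\le n$, $K_+^{[m]}=\sum_{j=1}^m (x_j^2\partial_{x_j}+2\nu_j x_j)$ and $K_-^{[m]}=\sum_{j=1}^m\partial_{x_j}$, acting on polynomials in $x_1,\ldots,x_m$. $\mathcal{H}_k(\mathbb{R}^n)=\mathcal{P}_k(\mathbb{R}^n)\cap\ker K_-^{[n]}$. For $2\le m\le n$, $CK_m$ is the map sending a polynomial $p(x_1,\ldots,x_{m-1})$ to $p(x_1-x_m,\ldots,x_{m-1}-x_m)$. *)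

From HB Require Import structures.
From mathcomp Require Import all_boot all_order all_algebra.
From mathcomp Require Import mpoly.
Set Implicit Arguments. Unset Strict Implicit. Unset Printing Implicit Defensive.
Import Order.TTheory GRing.Theory Num.Theory.
Local Open Scope ring_scope.

Section Defs.
Variables (R : realFieldType) (n : nat).

(* The variable x_{c+1} (0-indexed c), or 0 if c >= n (never used so). *)
Definition Xvar (c : nat) : {mpoly R[n]} := oapp (fun i : 'I_n => 'X_i) 0 (insub c).

(* K_+^{[m]} = sum_{j=1}^m (x_j^2 d_{x_j} + 2 nu_j x_j), acting on polynomials
   in x_1..x_m, viewed inside R[x_1..x_n]; variable x_j has index j-1. *)
Definition Kplus (nu : 'I_n -> R) (m : nat) (p : {mpoly R[n]}) : {mpoly R[n]} :=
  \sum_(i : 'I_n | (i < m)%N) ('X_i ^+ 2 * p^`M(i) + (2 * nu i) *: ('X_i * p)).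

Definition Kminus (m : nat) (p : {mpoly R[n]}) : {mpoly R[n]} :=
  \sum_(i : 'I_n | (i < m)%N) p^`M(i).

Definition CK (m : nat) (p : {mpoly R[n]}) : {mpoly R[n]} :=
  p \mPo [tuple (if (i < m.-1)%N then 'X_i - Xvar m.-1 else 'X_i) | i < n].

Definition Hk (k : nat) : pred {mpoly R[n]} :=
  fun p => (p \is k.-homog) && (Kminus n p == 0).

(* inner jf m' is the argument of CK_{m'+2} in the nested expression:
   inner 0 = x_1^{j_1},
   inner (m'+1) = (K_+^{[m'+2]})^{j_{m'+2}} (CK_{m'+2} (inner m')). *)
Fixpoint psi_inner (nu : 'I_n -> R) (jf : nat -> nat) (m' : nat) : {mpoly R[n]} :=
  match m' with
  | 0 => Xvar 0 ^+ jf 1%N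
  | m''.+1 => iter (jf m''.+2) (Kplus nu m''.+2) (CK m''.+2 (psi_inner nu jf m''))
  end.

(* psi_{j_1,...,j_{n-1}} = CK_n ( ... ) ; jf l = j_l for 1 <= l <= n-1. *)
Definition psi (nu : 'I_n -> R) (jf : nat -> nat) : {mpoly R[n]} :=
  CK n (psi_inner nu jf (n - 2)).

(* j : {ffun 'I_(n-1) -> 'I_(k+1)} encodes (j_1,...,j_{n-1}) with j_l = j (l-1). *)
Definition jfun (k : nat) (j : {ffun 'I_n.-1 -> 'I_k.+1}) (l : nat) : nat :=
  oapp (fun i : 'I_n.-1 => nat_of_ord (j i)) 0%N (insub l.-1).

Definition Jset (k : nat) : {set {ffun 'I_n.-1 -> 'I_k.+1}} :=
  [set j : {ffun 'I_n.-1 -> 'I_k.+1} | (\sum_(i < n.-1) nat_of_ord (j i) == k)%N].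

End Defs.

From HB Require Import structures.
From mathcomp Require Import all_boot all_order all_algebra.
From mathcomp Require Import mpoly.
From mathcomp Require Import ring.
Import Order.TTheory GRing.Theory Num.Theory.
Local Open Scope ring_scope.

Set Implicit Arguments.
Unset Strict Implicit.
Unset Printing Implicit Defensive.

(* The substitution CK_m is a shear, hence a linear automorphism of R[x_1..x_n]; it
   turns d/dx_m into K_-^{[m]} and commutes with d/dx_i for i > m.  So CK_m maps the
   degree-d polynomials in x_1..x_{m-1} isomorphically onto H_d(R^m), and it suffices
   to show, by induction on m, that the arguments of CK_n form a basis of P_k(R^{n-1}).
   For h in H_d(R^m) one has K_- K_+^(a+1) h = (a+1)(2d + a + 2 sigma_m) K_+^a h, with
   sigma_m = nu_1 + ... + nu_m > 0; this gives the Fischer decomposition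
   P_k(R^m) = (+)_{a <= k} K_+^a H_{k-a}(R^m).  Splitting off the last index j_m = a,
   the polynomials of level m are K_+^a CK_m applied to those of level m - 1, i.e. the
   images of bases of H_{k-a}(R^m) spread over the summands. *)

Definition is_basis (R : nzRingType) (V : lmodType R) (T : finType)
    (S : {pred V}) (I : {set T}) (b : T -> V) : Prop :=
  (forall j, j \in I -> b j \in S) /\
  (forall c : T -> R, \sum_(j in I) c j *: b j = 0 -> forall j, j \in I -> c j = 0) /\
  (forall v, v \in S -> exists c : T -> R, v = \sum_(j in I) c j *: b j).

Lemma eq_is_basis (R : nzRingType) (V : lmodType R) (T : finType)
    (S : {pred V}) (I : {set T}) (b1 b2 : T -> V) :
  b1 =1 b2 -> is_basis S I b1 -> is_basis S I b2.
Proof.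
move=> eb [bS [b_free b_span]]; split; [|split].
- by move=> j; rewrite -eb; apply: bS.
- by move=> c c0; apply: b_free; rewrite -[RHS]c0; apply: eq_bigr => j _; rewrite eb.
by move=> v /b_span[c ->]; exists c; apply: eq_bigr => j _; rewrite eb.
Qed.

Lemma is_basis_linear (R : nzRingType) (V W : lmodType R) (T : finType)
    (S : {pred V}) (S' : {pred W}) (I : {set T}) (b : T -> V) (f : {linear V -> W}) :
  injective f -> {in S, forall v, f v \in S'} ->
  {in S', forall w, exists2 v, v \in S & w = f v} ->
  is_basis S I b -> is_basis S' I (f \o b).
Proof.
move=> f_inj fS fS' [bS [b_free b_span]]; split; [|split].
- by move=> j /bS /fS.
- move=> c cb0; apply: b_free; apply: f_inj; rewrite linear0 -cb0 linear_sum.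
  by apply: eq_bigr => j _; rewrite linearZ.
move=> w /fS' [v /b_span [c ->] ->]; exists c; rewrite linear_sum.
by apply: eq_bigr => j _; rewrite linearZ.
Qed.

Section Compositions.
Variable K : nat.

(* Entries are bounded by [K] rather than by the degree [k], so that the index sets
   of all degrees [k <= K] share one type. *)
Definition Jsum N k : {set {ffun 'I_N -> 'I_K.+1}} :=
  [set j : {ffun 'I_N -> 'I_K.+1} | (\sum_(i < N) j i == k)%N].

Variable N : nat.
Implicit Types (j : {ffun 'I_N -> 'I_K.+1}) (a : 'I_K.+1).

Definition ffun_rcons j a : {ffun 'I_N.+1 -> 'I_K.+1} :=
  [ffun i : 'I_N.+1 => if insub (val i) is Some i' then j i' else a].
Definition ffun_init (j : {ffun 'I_N.+1 -> 'I_K.+1}) : {ffun 'I_N -> 'I_K.+1} :=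
  [ffun i => j (widen_ord (leqnSn _) i)].
Definition ffun_last (j : {ffun 'I_N.+1 -> 'I_K.+1}) : 'I_K.+1 := j ord_max.

Lemma ffun_init_rcons j a : ffun_init (ffun_rcons j a) = j.
Proof. by apply/ffunP => i; rewrite !ffunE /= valK. Qed.

Lemma ffun_last_rcons j a : ffun_last (ffun_rcons j a) = a.
Proof. by rewrite /ffun_last ffunE insubF //= ltnn. Qed.

Lemma ffun_rcons_init_last (j : {ffun 'I_N.+1 -> 'I_K.+1}) :
  ffun_rcons (ffun_init j) (ffun_last j) = j.
Proof.
apply/ffunP => i; rewrite !ffunE; case: insubP => [i' _ iE|].
  by rewrite ffunE; congr (j _); apply: val_inj.
rewrite -leqNgt => Ni; congr (j _); apply: val_inj => /=.
by apply/eqP; rewrite eqn_leq Ni -ltnS ltn_ord.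
Qed.

Lemma mem_Jsum_rcons j a (k : nat) :
  (ffun_rcons j a \in Jsum N.+1 k) = (a <= k)%N && (j \in Jsum N (k - a)%N).
Proof.
rewrite !inE big_ord_recr /= ffunE insubF ?ltnn //.
rewrite (eq_bigr (fun i => j i : nat)) => [|i _]; last by rewrite ffunE /= valK.
apply/eqP/andP => [<-|[ak /eqP ->]]; last by rewrite subnK.
by rewrite leq_addl addnK.
Qed.

Lemma big_Jsum_rcons (V : nmodType) k (F : {ffun 'I_N.+1 -> 'I_K.+1} -> V) :
  (k <= K)%N -> \sum_(j in Jsum N.+1 k) F j =
    \sum_(a < k.+1) \sum_(j in Jsum N (k - a)%N) F (ffun_rcons j (inord a)).
Proof.
move=> kK; rewrite (big_ord_widen K.+1
  (fun a : nat => \sum_(j in Jsum N (k - a)%N) F (ffun_rcons j (inord a)))) //.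
rewrite pair_big_dep /= (reindex (fun p : 'I_K.+1 * _ => ffun_rcons p.2 p.1)) /=.
  by apply: eq_big => [[a j]|[a j] _] /=; rewrite ?mem_Jsum_rcons ?inord_val.
exists (fun j : {ffun 'I_N.+1 -> 'I_K.+1} => (ffun_last j, ffun_init j)) => [[a j] _|j _] /=.
  by rewrite ffun_init_rcons ffun_last_rcons.
exact: ffun_rcons_init_last.
Qed.

Lemma Jsum1 k : (k <= K)%N -> Jsum 1 k = [set [ffun => inord k]].
Proof.
move=> kK; apply/setP => j; rewrite !inE big_ord1; apply/eqP/eqP => [jk|->].
  by apply/ffunP => i; rewrite ord1 ffunE; apply: val_inj; rewrite /= inordK.
by rewrite ffunE inordK.
Qed.

End Compositions.

Section Derivatives.
Variables (R : comRingType) (n : nat).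
Implicit Types (p q : {mpoly R[n]}) (t : n.-tuple {mpoly R[n]}).

Lemma mderivXU (i j : 'I_n) : ('X_j : {mpoly R[n]})^`M(i) = (j == i)%:R.
Proof.
rewrite mderivX mnm1E; case: eqP => [->|_]; last by rewrite scale0r.
by rewrite -{1}[U_(i)%MM]add0m addmK mpolyX0 scale1r.
Qed.

Lemma derivation_eq0 (phi D : {mpoly R[n]} -> {mpoly R[n]}) :
  phi 1 = 1 -> linear D ->
  (forall p q, D (p * q) = D p * phi q + phi p * D q) ->
  (forall i, D 'X_i = 0) -> D =1 (fun=> 0).
Proof.
move=> phi1 linD DM DX.
have DD x y : D (x + y) = D x + D y by have := linD 1 x y; rewrite !scale1r.
have D0 : D 0 = 0 by apply: (addrI (D 0)); rewrite -DD !addr0.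
have DZ c x : D (c *: x) = c *: D x by have := linD c x 0; rewrite !addr0 D0 addr0.
have DMl x y : D x = 0 -> D y = 0 -> D (x * y) = 0.
  by move=> Dx Dy; rewrite DM Dx Dy mul0r mulr0 addr0.
have D1 : D 1 = 0.
  have := DM 1 1; rewrite mulr1 phi1 mulr1 mul1r => D11.
  by apply: (addrI (D 1)); rewrite addr0 -D11.
move=> p /=; rewrite (mpolyE p).
apply: (big_ind (fun x => D x = 0)) => [//|x y Dx Dy|m _]; first by rewrite DD Dx Dy addr0.
rewrite DZ mpolyXE_id (big_ind (fun x => D x = 0)) ?scaler0 // => i _.
by elim: (m i) => [|k IH]; rewrite ?expr0 // exprS DMl.
Qed.

Lemma mderiv_comp p t i :
  (p \mPo t)^`M(i) = \sum_(j < n) (p^`M(j) \mPo t) * (tnth t j)^`M(i).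
Proof.
pose S p := \sum_(j < n) (p^`M(j) \mPo t) * (tnth t j)^`M(i).
apply/eqP; rewrite -subr_eq0 -/(S p); apply/eqP; move: p.
apply: (derivation_eq0 (phi := comp_mpoly t)); first exact: comp_mpoly1.
- move=> a u v; rewrite comp_mpolyD comp_mpolyZ mderivD mderivZ /S.
  under eq_bigr do rewrite mderivD mderivZ comp_mpolyD comp_mpolyZ mulrDl -scalerAl.
  by rewrite big_split -scaler_sumr /= scalerBr addrACA opprD.
- move=> u v; rewrite rmorphM mderivM /S.
  have -> : \sum_(j < n) (((u * v)^`M(j)) \mPo t) * (tnth t j)^`M(i) =
      (\sum_(j < n) (u^`M(j) \mPo t) * (tnth t j)^`M(i)) * (v \mPo t) +
      (u \mPo t) * \sum_(j < n) (v^`M(j) \mPo t) * (tnth t j)^`M(i).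
    rewrite mulr_suml mulr_sumr -big_split; apply: eq_bigr => j _.
    by rewrite mderivM rmorphD !rmorphM /=; ring.
  ring.
move=> k; rewrite comp_mpolyXU -tnth_nth /S (bigD1 k) //= mderivXU eqxx.
rewrite rmorph1 mul1r big1 ?addr0 ?subrr // => j /negbTE kj.
by rewrite mderivXU eq_sym kj rmorph0 mul0r.
Qed.

Lemma sum_mul_delta (F : 'I_n -> {mpoly R[n]}) i : \sum_(j < n) F j * (j == i)%:R = F i.
Proof.
rewrite (bigD1 i) //= eqxx mulr1 big1 ?addr0 // => j /negbTE ->.
by rewrite mulr0.
Qed.

Lemma mderiv_comp_id p t i : (forall j, (tnth t j)^`M(i) = (j == i)%:R) ->
  (p \mPo t)^`M(i) = p^`M(i) \mPo t.
Proof.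
by move=> tE; rewrite mderiv_comp (eq_bigr _ (fun j _ => congr1 _ (tE j))) sum_mul_delta.
Qed.

Lemma comp_mpolyA p t1 t2 :
  (p \mPo t1) \mPo t2 = p \mPo [tuple tnth t1 i \mPo t2 | i < n].
Proof.
rewrite [p \mPo t1]comp_mpolyEX [p \mPo _]comp_mpolyEX raddf_sum /=.
apply: eq_bigr => m _; rewrite comp_mpolyZ !comp_mpolyX rmorph_prod.
by congr (_ *: _); apply: eq_bigr => i _; rewrite rmorphXn tnth_mktuple.
Qed.

Lemma mcoeff_mulX_mderiv p i m : ('X_i * p^`M(i))@_m = (m i)%:R * p@_m.
Proof.
have [m_i0|m_i_gt0] := posnP (m i).
  rewrite m_i0 mul0r; apply/eqP; rewrite mcoeff_eq0 mulrC.
  apply/negP; rewrite (perm_mem (msuppMX _ _)) => /mapP[m' _ mE].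
  by move: m_i0; rewrite mE mnmDE mnm1E eqxx; case: (m' i).
have mE : m = (U_(i) + (m - U_(i)))%MM.
  apply/mnmP => j; rewrite mnmDE mnmBE mnm1E.
  by case: eqP => [<-|]; rewrite ?subn0 // add1n subn1 prednK.
rewrite mulrC {1}mE mcoeffMX mcoeff_mderiv addmC -mE mulr_natl; congr (_ *+ _).
by rewrite mnmBE mnm1E eqxx subn1 prednK.
Qed.

Lemma dhomogXU i : ('X_i : {mpoly R[n]}) \is 1.-homog.
Proof. by rewrite dhomogX; apply/eqP; exact: mdeg1. Qed.

Lemma dhomog_mderiv p d i : p \is d.-homog -> p^`M(i) \is d.-1.-homog.
Proof.
move=> /dhomogP hp; apply/dhomogP => m; rewrite mcoeff_msupp mcoeff_mderiv => nz.
have : p@_(m + U_(i))%MM != 0 by apply: contraNneq nz => ->; rewrite mul0rn.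
rewrite -mcoeff_msupp => /hp <-; change (mdeg m = (mdeg (m + U_(i))%MM).-1).
by rewrite mdegD mdeg1 addn1.
Qed.

Lemma mderiv_dhomog0 p i : p \is 0.-homog -> p^`M(i) = 0.
Proof.
move=> hp; apply/mpolyP => m; rewrite mcoeff_mderiv mcoeff0 (dhomog_nemf_coeff hp) ?mul0rn //.
by change (mdeg (m + U_(i))%MM != 0%N); rewrite mdegD mdeg1 addn1.
Qed.

Lemma dhomog_mulX_mderiv p d i : p \is d.-homog -> 'X_i * p^`M(i) \is d.-homog.
Proof.
move=> /dhomogP hp; apply/dhomogP => m; rewrite mcoeff_msupp mcoeff_mulX_mderiv => nz.
by apply: hp; rewrite mcoeff_msupp; apply: contraNneq nz => ->; rewrite mulr0.
Qed.

Lemma euler_dhomog p d : p \is d.-homog -> \sum_(i < n) 'X_i * p^`M(i) = d%:R *: p.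
Proof.
move=> /dhomogP hp; apply/mpolyP => m; rewrite raddf_sum mcoeffZ /=.
under eq_bigr do rewrite mcoeff_mulX_mderiv.
rewrite -mulr_suml -natr_sum -mdegE.
have [->|nz] := eqVneq p@_m 0; first by rewrite !mulr0.
by rewrite hp // mcoeff_msupp.
Qed.

Lemma dhomog_comp p t d : (forall i, tnth t i \is 1.-homog) ->
  p \is d.-homog -> p \mPo t \is d.-homog.
Proof.
move=> ht /dhomogP hp; rewrite comp_mpolyEX big_seq; apply: rpred_sum => m /hp md.
have <- : mdeg m = d := md.
rewrite rpredZ // comp_mpolyX mdegE; elim: (index_enum _) => [|i s IH].
  by rewrite !big_nil dhomog1.
by rewrite !big_cons (dhomogM _ IH) // -[X in X.-homog]mul1n dhomogMn.
Qed.

End Derivatives.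

Section Operators.
Variables (R : realFieldType) (n : nat).
Local Notation P := {mpoly R[n]}.
Implicit Types (p q : P) (t : n.-tuple P).

Lemma Kminus_is_linear m : linear (@Kminus R n m).
Proof.
move=> a p q; rewrite /Kminus scaler_sumr -big_split.
by apply: eq_bigr => i _; rewrite mderivD mderivZ.
Qed.
HB.instance Definition _ m :=
  GRing.isLinear.Build R P P *:%R (@Kminus R n m) (Kminus_is_linear m).

Lemma CK_is_linear m : linear (@CK R n m).
Proof. by move=> a p q; rewrite /CK comp_mpolyD comp_mpolyZ. Qed.
HB.instance Definition _ m :=
  GRing.isLinear.Build R P P *:%R (@CK R n m) (CK_is_linear m).

Lemma KminusM m p q : Kminus m (p * q) = Kminus m p * q + p * Kminus m q.
Proof.
rewrite /Kminus mulr_suml mulr_sumr -big_split.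
by apply: eq_bigr => i _; rewrite mderivM.
Qed.

Lemma KminusX m (i : 'I_n) : Kminus m ('X_i : P) = (i < m)%:R.
Proof.
rewrite /Kminus big_mkcond (bigD1 i) //= mderivXU eqxx big1 => [|j /negbTE ij].
  by case: (i < m)%N; rewrite addr0.
by rewrite mderivXU eq_sym ij; case: ifP.
Qed.

Lemma Kminus_comp m p t :
  Kminus m (p \mPo t) = \sum_(j < n) (p^`M(j) \mPo t) * Kminus m (tnth t j).
Proof.
rewrite /Kminus; under eq_bigr do rewrite mderiv_comp.
by rewrite exchange_big; apply: eq_bigr => j _; rewrite mulr_sumr.
Qed.

Lemma mderiv_Kminus m p i : (Kminus m p)^`M(i) = Kminus m (p^`M(i)).
Proof. by rewrite /Kminus raddf_sum; apply: eq_bigr => l _; rewrite mderiv_comm. Qed.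

Lemma dhomog_Kminus m p d : p \is d.-homog -> Kminus m p \is d.-1.-homog.
Proof. by move=> hp; apply: rpred_sum => i _; exact: dhomog_mderiv. Qed.

Definition firstvars_pred m : pred P :=
  fun p => [forall i : 'I_n, (m <= i)%N ==> (p^`M(i) == 0)].
Definition firstvars m : qualifier 0 P := [qualify p | firstvars_pred m p].

Lemma firstvarsP m p :
  reflect (forall i : 'I_n, (m <= i)%N -> p^`M(i) = 0) (p \is firstvars m).
Proof.
apply: (iffP forallP) => [h i mi|h i]; first by apply/eqP; rewrite (implyP (h i)).
by apply/implyP => /h ->.
Qed.

Lemma firstvars_submod_closed m : submod_closed (firstvars m).
Proof.
split=> [|c p q /firstvarsP hp /firstvarsP hq]; apply/firstvarsP => i mi.
  by rewrite mderiv0.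
by rewrite mderivD mderivZ hp // hq // scaler0 addr0.
Qed.
HB.instance Definition _ m := GRing.isSubmodClosed.Build R P (firstvars_pred m)
  (firstvars_submod_closed m).

Lemma firstvarsS m1 m2 p : (m1 <= m2)%N -> p \is firstvars m1 -> p \is firstvars m2.
Proof.
by move=> m12 /firstvarsP hp; apply/firstvarsP => i mi; rewrite hp // (leq_trans m12).
Qed.

Lemma firstvars_Kminus m1 m2 p : p \is firstvars m1 -> Kminus m2 p \is firstvars m1.
Proof.
by move=> /firstvarsP hp; apply/firstvarsP => i mi; rewrite mderiv_Kminus hp // raddf0.
Qed.

Lemma euler_firstvars m p d : p \is firstvars m -> p \is d.-homog ->
  \sum_(i : 'I_n | (i < m)%N) 'X_i * p^`M(i) = d%:R *: p.
Proof.
move=> /firstvarsP hp /euler_dhomog <-; rewrite big_mkcond.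
by apply: eq_bigr => i _; case: ltnP => // mi; rewrite hp ?mulr0.
Qed.

Definition harmonic_pred m d : pred P :=
  fun p => [&& p \is d.-homog, p \is firstvars m & Kminus m p == 0].
Definition harmonic m d : qualifier 0 P := [qualify p | harmonic_pred m d p].

Lemma harmonicP m d p :
  reflect [/\ p \is d.-homog, p \is firstvars m & Kminus m p = 0] (p \is harmonic m d).
Proof. by apply: (iffP and3P) => -[hp vp /eqP kp]. Qed.

Lemma harmonic_submod_closed m d : submod_closed (harmonic m d).
Proof.
split=> [|c p q /harmonicP[hp vp kp] /harmonicP[hq vq kq]].
  by apply/harmonicP; rewrite rpred0 rpred0 raddf0.
apply/harmonicP; rewrite !(rpredD, rpredZ) //; split=> //.
by rewrite Kminus_is_linear kp kq scaler0 addr0.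
Qed.
HB.instance Definition _ m d := GRing.isSubmodClosed.Build R P (harmonic_pred m d)
  (harmonic_submod_closed m d).

Definition Pk m d : pred P := [pred p | (p \is firstvars m) && (p \is d.-homog)].

Lemma mcoeff_firstvars m p (i : 'I_n) (mono : 'X_{1..n}) :
  p \is firstvars m -> (m <= i)%N -> (0 < mono i)%N -> p@_mono = 0.
Proof.
move=> /firstvarsP vp mi mono_i; have := mcoeff_mulX_mderiv p i mono.
by rewrite vp // mulr0 mcoeff0 => /esym/eqP; rewrite mulf_eq0 pnatr_eq0 gtn_eqF // => /eqP.
Qed.

Lemma firstvars_all p : p \is firstvars n.
Proof. by apply/firstvarsP => i; rewrite leqNgt ltn_ord. Qed.

Lemma Hk_harmonic d p : (p \in @Hk R n d) = (p \is harmonic n d).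
Proof.
rewrite unfold_in /=; apply/andP/harmonicP => [[hp /eqP kp]|[hp _ /eqP kp]] //.
by split=> //; exact: firstvars_all.
Qed.

End Operators.

Arguments firstvars_pred {R n} m p /.
Arguments firstvars {R n} m.
Arguments harmonic_pred {R n} m d p /.
Arguments harmonic {R n} m d.
Arguments Pk {R n} m d.

Section Kplus.
Variables (R : realFieldType) (n : nat) (nu : 'I_n -> R).
Local Notation P := {mpoly R[n]}.
Implicit Types (p q : P).

Lemma Kplus_is_linear m : linear (Kplus nu m).
Proof.
move=> a p q; rewrite /Kplus scaler_sumr -big_split; apply: eq_bigr => i _.
by rewrite mderivD mderivZ -!mul_mpolyC /=; ring.
Qed.
HB.instance Definition _ m :=
  GRing.isLinear.Build R P P *:%R (Kplus nu m) (Kplus_is_linear m).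

Lemma iter_Kplus_is_linear m a : linear (iter a (Kplus nu m)).
Proof. by move=> c p q; elim: a => //= a ->; rewrite linearP. Qed.
HB.instance Definition _ m a :=
  GRing.isLinear.Build R P P *:%R (iter a (Kplus nu m)) (iter_Kplus_is_linear m a).

Lemma firstvars_Kplus m p : p \is firstvars m -> Kplus nu m p \is firstvars m.
Proof.
move=> /firstvarsP vp; apply/firstvarsP => i mi; rewrite /Kplus raddf_sum /= big1 // => l lm.
have /negbTE li : l != i by rewrite neq_ltn (leq_trans lm mi).
rewrite expr2 mderivD mderivZ !mderivM !mderivXU li (mderiv_comm l i) (vp i mi).
by rewrite !(mul0r, mulr0, addr0, scaler0, mderiv0).
Qed.

Lemma dhomog_Kplus m p d : p \is d.-homog -> Kplus nu m p \is d.+1.-homog.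
Proof.
move=> hp; apply: rpred_sum => l _; rewrite expr2 -mulrA.
by rewrite rpredD ?rpredZ // (dhomogM (dhomogXU R l)) ?dhomog_mulX_mderiv.
Qed.

Lemma firstvars_iter_Kplus m a p :
  p \is firstvars m -> iter a (Kplus nu m) p \is firstvars m.
Proof. by move=> vp; elim: a => //= a; apply: firstvars_Kplus. Qed.

Lemma dhomog_iter_Kplus m a p d :
  p \is d.-homog -> iter a (Kplus nu m) p \is (d + a).-homog.
Proof. by move=> hp; elim: a => [|a IH]; rewrite ?addn0 // addnS; apply: dhomog_Kplus. Qed.

Definition sigma m : R := \sum_(i : 'I_n | (i < m)%N) nu i.

Lemma Kminus_Kplus m p :
  Kminus m (Kplus nu m p) = Kplus nu m (Kminus m p) +
    2%:R *: \sum_(i : 'I_n | (i < m)%N) 'X_i * p^`M(i) + (2%:R * sigma m) *: p.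
Proof.
rewrite /Kplus /sigma raddf_sum scaler_sumr mulr_sumr scaler_suml -!big_split /=.
apply: eq_bigr => l lm; rewrite raddfD /= linearZ /= (KminusM m) (KminusM m).
rewrite expr2 (KminusM m) !KminusX lm -mderiv_Kminus.
by rewrite -!mul_mpolyC !rmorphM /= !rmorph_nat; ring.
Qed.

Lemma sigma_gt0 (i : 'I_n) m : (forall i, 0 < nu i) -> (i < m)%N -> 0 < sigma m.
Proof.
move=> nu_gt0 im; rewrite /sigma (bigD1 i) //= ltr_pwDl //.
by rewrite sumr_ge0 // => l _; rewrite ltW.
Qed.

Definition lower_coef m d a : R := a.+1%:R * (2%:R * d%:R + a%:R + 2%:R * sigma m).

Lemma Kminus_iter_Kplus m d a h : h \is harmonic m d ->
  Kminus m (iter a.+1 (Kplus nu m) h) = lower_coef m d a *: iter a (Kplus nu m) h.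
Proof.
move=> /harmonicP[hh vh kh]; elim: a => [|a IH].
  rewrite /= Kminus_Kplus kh raddf0 add0r (euler_firstvars vh hh) scalerA -scalerDl.
  by congr (_ *: _); rewrite /lower_coef; ring.
rewrite iterS Kminus_Kplus IH linearZ /= -iterS.
rewrite (euler_firstvars (firstvars_iter_Kplus _ vh) (dhomog_iter_Kplus _ _ hh)).
by rewrite !scalerA -!scalerDl; congr (_ *: _); rewrite /lower_coef natrD; ring.
Qed.

End Kplus.

Section Fischer.
Variables (R : realFieldType) (n : nat) (nu : 'I_n -> R) (m : nat).
Hypothesis sigma_m_gt0 : 0 < sigma nu m.
Local Notation P := {mpoly R[n]}.
Local Notation Kp := (Kplus nu m).

Lemma lower_coef_neq0 d a : lower_coef nu m d a != 0.
Proof.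
rewrite mulf_neq0 ?pnatr_eq0 //; apply: lt0r_neq0; apply: ltr_wpDl.
  by rewrite addr_ge0 ?mulr_ge0 ?ler0n.
by rewrite mulr_gt0 ?ltr0n.
Qed.

Lemma Kminus_fischer k (h : 'I_k.+2 -> P) :
  (forall a : 'I_k.+2, h a \is harmonic m (k.+1 - a)%N) ->
  Kminus m (\sum_(a < k.+2) iter a Kp (h a)) =
    \sum_(a < k.+1) iter a Kp (lower_coef nu m (k - a)%N a *: h (lift ord0 a)).
Proof.
move=> hh; rewrite raddf_sum big_ord_recl /=.
have /harmonicP[_ _ ->] := hh ord0; rewrite add0r; apply: eq_bigr => a _.
have := hh (lift ord0 a); rewrite lift0 subSS => ha.
by rewrite add0n -iterS (Kminus_iter_Kplus _ _ ha) linearZ.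
Qed.

Lemma fischer_uniq k (h : 'I_k.+1 -> P) :
  (forall a : 'I_k.+1, h a \is harmonic m (k - a)%N) ->
  \sum_(a < k.+1) iter a Kp (h a) = 0 -> forall a, h a = 0.
Proof.
elim: k h => [|k IH] h hh S; first by move=> a; rewrite ord1; move: S; rewrite big_ord1.
have hlift a : h (lift ord0 a) = 0.
  have: lower_coef nu m (k - a)%N a *: h (lift ord0 a) = 0.
    apply: (IH (fun b => lower_coef nu m (k - b)%N b *: h (lift ord0 b))).
      by move=> b; apply: rpredZ; have := hh (lift ord0 b); rewrite lift0 subSS.
    by rewrite -Kminus_fischer // S raddf0.
  by move/eqP; rewrite scaler_eq0 (negPf (lower_coef_neq0 _ _)) => /eqP.
move=> a; case: (unliftP ord0 a) => [b ->|->]; first exact: hlift.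
move: S; rewrite big_ord_recl big1 ?addr0 // => b _.
by rewrite hlift raddf0.
Qed.

Lemma fischer_exists k q : q \is firstvars m -> q \is k.-homog ->
  exists2 h : 'I_k.+1 -> P, (forall a : 'I_k.+1, h a \is harmonic m (k - a)%N) &
    q = \sum_(a < k.+1) iter a Kp (h a).
Proof.
elim: k q => [|k IH] q vq hq.
  exists (fun=> q) => [a|]; last by rewrite big_ord1.
  apply/harmonicP; split => //; apply: big1 => i _; exact: mderiv_dhomog0.
have [g hg Kq] := IH _ (firstvars_Kminus m vq) (dhomog_Kminus m hq).
pose h0 (a : 'I_k.+1) := (lower_coef nu m (k - a)%N a)^-1 *: g a.
have hh0 a : h0 a \is harmonic m (k - a)%N by apply: rpredZ.
have Kh0 (a : 'I_k.+1) : Kminus m (iter a.+1 Kp (h0 a)) = iter a Kp (g a).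
  by rewrite (Kminus_iter_Kplus _ _ (hh0 a)) linearZ /= scalerKV ?lower_coef_neq0.
pose r := q - \sum_(a < k.+1) iter a.+1 Kp (h0 a).
exists (fun b => if unlift ord0 b is Some a then h0 a else r) => [b|]; last first.
  rewrite big_ord_recl unlift_none /r.
  rewrite [X in _ = _ + X](eq_bigr (fun a : 'I_k.+1 => iter a.+1 Kp (h0 a))) ?subrK //.
  by move=> a _; rewrite liftK lift0.
case: (unliftP ord0 b) => [a ->|->]; first by rewrite lift0 subSS.
rewrite subn0; apply/harmonicP; split.
- rewrite rpredB // rpred_sum // => a _; have /harmonicP[ha _ _] := hh0 a.
  by have := dhomog_iter_Kplus nu m a.+1 ha; rewrite addnS subnK // -ltnS.
- rewrite rpredB // rpred_sum // => a _; apply: firstvars_iter_Kplus.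
  by have /harmonicP[] := hh0 a.
have KS : Kminus m (\sum_(a < k.+1) iter a.+1 Kp (h0 a)) = Kminus m q.
  by rewrite Kq raddf_sum; apply: eq_bigr => a _; exact: Kh0.
have -> : Kminus m r = Kminus m q - Kminus m (\sum_(a < k.+1) iter a.+1 Kp (h0 a)).
  exact: raddfB.
by rewrite KS subrr.
Qed.

End Fischer.

Section Shear.
Variables (R : realFieldType) (n : nat) (e : 'I_n).
Local Notation P := {mpoly R[n]}.
Implicit Types (p q : P) (s : R).

Definition shear s : n.-tuple P :=
  [tuple if (i < e)%N then 'X_i + s *: 'X_e else 'X_i | i < n].

Lemma CK_shear p : CK e.+1 p = p \mPo shear (-1).
Proof.
rewrite /CK /= /Xvar valK /=; congr comp_mpoly.
by apply: eq_mktuple => i; rewrite scaleN1r.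
Qed.

Lemma shear_comp p s1 s2 : (p \mPo shear s1) \mPo shear s2 = p \mPo shear (s1 + s2).
Proof.
rewrite comp_mpolyA; congr comp_mpoly; apply: eq_mktuple => i.
rewrite tnth_mktuple; case: ifP => ie; rewrite ?comp_mpolyD ?comp_mpolyZ !comp_mpolyXU;
  rewrite -!tnth_nth !tnth_mktuple ?ie // ltnn.
by rewrite scalerDl addrA addrAC.
Qed.

Lemma shear0 p : p \mPo shear 0 = p.
Proof.
rewrite -[RHS]comp_mpoly_id; congr comp_mpoly; apply: eq_mktuple => i.
by rewrite scale0r addr0 if_same.
Qed.

Lemma mderiv_shear s p (i : 'I_n) : i != e -> (p \mPo shear s)^`M(i) = p^`M(i) \mPo shear s.
Proof.
move=> ie; apply: mderiv_comp_id => j; rewrite tnth_mktuple.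
case: ifP => _; rewrite ?mderivD ?mderivZ !mderivXU //.
by rewrite [e == i]eq_sym (negPf ie) scaler0 addr0.
Qed.

Lemma firstvars_shear s m p :
  (e < m)%N -> p \is firstvars m -> p \mPo shear s \is firstvars m.
Proof.
move=> em /firstvarsP vp; apply/firstvarsP => i mi.
by rewrite mderiv_shear ?vp ?raddf0 // neq_ltn (leq_trans em mi) orbT.
Qed.

Lemma dhomog_shear s p d : p \is d.-homog -> p \mPo shear s \is d.-homog.
Proof.
apply: dhomog_comp => i; rewrite tnth_mktuple.
by case: ifP => _; rewrite ?rpredD ?rpredZ ?dhomogXU.
Qed.

Lemma Kminus_CK p : Kminus e.+1 (CK e.+1 p) = CK e.+1 (p^`M(e)).
Proof.
rewrite !CK_shear Kminus_comp.
rewrite -[RHS](sum_mul_delta (fun j => p^`M(j) \mPo shear (-1)) e).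
apply: eq_bigr => j _; congr (_ * _); rewrite tnth_mktuple; case: ltnP => [je|ej].
  rewrite raddfD /= linearZ /= !KminusX ltnS (ltnW je) leqnn scaleN1r subrr.
  by have /negPf-> : j != e by rewrite neq_ltn je.
rewrite KminusX ltnS; suff -> : (j == e) = (j <= e)%N by [].
by apply/eqP/idP => [->|je] //; apply/val_inj/eqP; rewrite eqn_leq je ej.
Qed.

Lemma CK_inj : injective (CK e.+1 : P -> P).
Proof.
apply: (can_inj (g := comp_mpoly (shear 1))) => p.
by rewrite CK_shear shear_comp addNr shear0.
Qed.

Lemma CK_harmonic p d : p \in Pk e d -> CK e.+1 p \is harmonic e.+1 d.
Proof.
case/andP => /[dup] vp /firstvarsP dp hp; apply/harmonicP; split.
- by rewrite CK_shear dhomog_shear.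
- by rewrite CK_shear firstvars_shear // (firstvarsS _ vp).
- by rewrite Kminus_CK dp // raddf0.
Qed.

Lemma harmonic_CK q d : q \is harmonic e.+1 d -> exists2 p, p \in Pk e d & q = CK e.+1 p.
Proof.
case/harmonicP => hq vq Kq; exists (q \mPo shear 1); last first.
  by rewrite CK_shear shear_comp addrN shear0.
have dp : (q \mPo shear 1)^`M(e) = 0.
  by apply: CK_inj; rewrite -Kminus_CK CK_shear shear_comp addrN shear0 Kq raddf0.
rewrite inE dhomog_shear // andbT; apply/firstvarsP => i; rewrite leq_eqVlt.
case/orP => [/eqP/val_inj <- //|ei].
by have /firstvarsP := firstvars_shear 1 (leqnn _) vq; apply.
Qed.

End Shear.

Section Psi.
Variables (R : realFieldType) (n : nat) (nu : 'I_n -> R).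
Hypothesis nu_gt0 : forall i, 0 < nu i.
Local Notation P := {mpoly R[n]}.

Definition psi_part M K (j : {ffun 'I_M.+1 -> 'I_K.+1}) : P :=
  psi_inner nu (@jfun M.+2 K j) M.

Lemma jfunE M K (j : {ffun 'I_M.+1 -> 'I_K.+1}) l (lM : (l.-1 < M.+1)%N) :
  @jfun M.+2 K j l = j (Ordinal lM).
Proof. by rewrite /jfun (insubT (fun x => x < M.+1)%N lM). Qed.

Lemma eq_psi_inner M (jf jf' : nat -> nat) :
  (forall l, (0 < l <= M.+1)%N -> jf l = jf' l) -> psi_inner nu jf M = psi_inner nu jf' M.
Proof.
elim: M => [|M IH] jfE /=; first by rewrite jfE.
rewrite jfE ?leqnn //; congr (iter _ _ (CK _ _)); apply: IH => l /andP[l0 lM].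
by rewrite jfE // l0 ltnW.
Qed.

Lemma psi_part_rcons M K (j : {ffun 'I_M.+1 -> 'I_K.+1}) a :
  psi_part (ffun_rcons j a) = iter a (Kplus nu M.+2) (CK M.+2 (psi_part j)).
Proof.
rewrite /psi_part /= (@jfunE M.+1 K _ M.+2 (ltnSn M.+1)) ffunE insubF ?ltnn //.
congr (iter _ _ (CK _ _)); apply: eq_psi_inner => l /andP[l0 lM].
have lM' : (l.-1 < M.+1)%N by rewrite prednK.
rewrite (jfunE _ lM') (jfunE _ (ltnW lM')) ffunE /= insubT /=.
by congr (nat_of_ord (j _)); apply: val_inj.
Qed.

Section Base.
Hypothesis n_gt0 : (0 < n)%N.
Let x0 : 'I_n := Ordinal n_gt0.

Lemma psi_part0 K (j : {ffun 'I_1 -> 'I_K.+1}) : psi_part j = 'X_x0 ^+ j ord0.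
Proof.
rewrite /psi_part /= (@jfunE 0 K j 1 (ltn0Sn 0)) /Xvar (insubT (fun x => x < n)%N n_gt0) /=.
by congr (_ ^+ nat_of_ord (j _)); apply: val_inj.
Qed.

Lemma Pk1_Xpow k : ('X_x0 ^+ k : P) \in Pk 1 k.
Proof.
rewrite inE; apply/andP; split; last by have := dhomogMn k (dhomogXU R x0); rewrite mul1n.
apply/firstvarsP => i i_gt0; rewrite mpolyXn mderivX mulmnE mnm1E.
rewrite (_ : x0 == i = false) ?mul0n ?scale0r //.
by apply/eqP => x0i; move: i_gt0; rewrite -x0i.
Qed.

Lemma Pk1_eq k (q : P) : q \in Pk 1 k -> q = q@_(U_(x0) *+ k) *: 'X_x0 ^+ k.
Proof.
case/andP => vq /dhomogP hq; rewrite mpolyXn; apply/mpolyP => mono.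
rewrite mcoeffZ mcoeffX; case: eqP => [<-|ne]; first by rewrite mulr1.
rewrite mulr0; have [//|nz] := eqVneq q@_mono 0; case: ne.
have mono0 i : i != x0 -> mono i = 0%N.
  move=> ix0; apply/eqP; apply: contraNT nz; rewrite -lt0n => mono_i.
  apply/eqP; apply: (mcoeff_firstvars vq _ mono_i).
  by rewrite lt0n; apply: contraNneq ix0 => i0; apply/eqP/val_inj.
have : mdeg mono = k by apply: hq; rewrite mcoeff_msupp.
rewrite mdegE (bigD1 x0) //= big1 => [|i /mono0 //]; rewrite addn0 => <-.
apply/mnmP => i; rewrite mulmnE mnm1E; case: eqP => [<-|/eqP]; first exact: mul1n.
by rewrite mul0n eq_sym => /mono0.
Qed.

Lemma psi_part_basis0 K k : (k <= K)%N -> is_basis (Pk 1 k) (Jsum K 1 k) (@psi_part 0 K).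
Proof.
move=> kK; have psiE : psi_part ([ffun => inord k] : {ffun 'I_1 -> 'I_K.+1}) = 'X_x0 ^+ k.
  by rewrite psi_part0 ffunE inordK.
have Xk_neq0 : 'X_x0 ^+ k != 0 :> P by rewrite mpolyXn -msupp_eq0 msuppX.
rewrite /is_basis Jsum1 //; split; [|split].
- by move=> j /set1P ->; rewrite psiE Pk1_Xpow.
- move=> c; rewrite big_set1 psiE => /eqP; rewrite scaler_eq0 (negPf Xk_neq0) orbF.
  by move=> /eqP c0 j /set1P ->.
move=> q /Pk1_eq qE; exists (fun=> q@_(U_(x0) *+ k)).
by rewrite big_set1 psiE -qE.
Qed.

End Base.

Section Step.
Variables (M K : nat).
Hypothesis M_lt : (M.+2 < n)%N.
Let e : 'I_n := Ordinal (ltnW M_lt).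
Local Notation Kp := (Kplus nu M.+2).
Hypothesis basis_prev :
  forall k, (k <= K)%N -> is_basis (Pk M.+1 k) (Jsum K M.+1 k) (@psi_part M K).

Let sigma_pos : 0 < sigma nu M.+2.
Proof. exact: (sigma_gt0 (i := e) nu_gt0 (ltnSn _)). Qed.

Lemma harmonic_basis k : (k <= K)%N ->
  is_basis (harmonic M.+2 k) (Jsum K M.+1 k) (CK M.+2 \o @psi_part M K).
Proof.
move=> kK; apply: (is_basis_linear (@CK_inj _ _ e)) (basis_prev kK).
- by move=> p; apply: (@CK_harmonic _ _ e).
- by move=> q; apply: (@harmonic_CK _ _ e).
Qed.

Variable k : nat.
Hypothesis kK : (k <= K)%N.

Lemma psi_part_in j : j \in Jsum K M.+2 k -> psi_part j \in Pk M.+2 k.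
Proof.
rewrite -(ffun_rcons_init_last j) mem_Jsum_rcons psi_part_rcons => /andP[ak jJ].
have /harmonicP[hh vh _] := (harmonic_basis (leq_trans (leq_subr _ _) kK)).1 _ jJ.
rewrite inE firstvars_iter_Kplus //=.
by have := dhomog_iter_Kplus nu M.+2 (ffun_last j) hh; rewrite subnK.
Qed.

Lemma psi_part_free (c : {ffun 'I_M.+2 -> 'I_K.+1} -> R) :
  \sum_(j in Jsum K M.+2 k) c j *: psi_part j = 0 ->
  forall j, j \in Jsum K M.+2 k -> c j = 0.
Proof.
move=> c0; pose h (a : 'I_k.+1) := \sum_(j in Jsum K M.+1 (k - a)%N)
  c (ffun_rcons j (inord a)) *: CK M.+2 (psi_part j).
have hB (a : 'I_k.+1) := harmonic_basis (leq_trans (leq_subr a k) kK).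
have hh a : h a \is harmonic M.+2 (k - a)%N.
  by apply: rpred_sum => j jJ; rewrite rpredZ // (hB a).1.
have h0 : \sum_(a < k.+1) iter a Kp (h a) = 0.
  rewrite -[RHS]c0 big_Jsum_rcons //; apply: eq_bigr => a _; rewrite linear_sum.
  apply: eq_bigr => j _; rewrite linearZ psi_part_rcons inordK //.
  exact: leq_trans (ltn_ord a) _.
move=> j; rewrite -(ffun_rcons_init_last j) mem_Jsum_rcons => /andP[ak jJ].
pose a : 'I_k.+1 := Ordinal (ak : ffun_last j < k.+1)%N.
have := (hB a).2.1 _ (fischer_uniq sigma_pos hh h0 a) _ jJ.
by rewrite /= inord_val.
Qed.

Lemma psi_part_span q : q \in Pk M.+2 k ->
  exists c, q = \sum_(j in Jsum K M.+2 k) c j *: psi_part j.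
Proof.
case/andP => vq hq; have [h hh ->] := fischer_exists sigma_pos vq hq.
have hB (a : 'I_k.+1) := harmonic_basis (leq_trans (leq_subr a k) kK).
have /fin_all_exists[C hC] (a : 'I_k.+1) : exists C,
    h a = \sum_(j in Jsum K M.+1 (k - a)%N) C j *: CK M.+2 (psi_part j).
  exact: (hB a).2.2 _ (hh a).
exists (fun j => C (inord (ffun_last j)) (ffun_init j)).
rewrite big_Jsum_rcons //; apply: eq_bigr => a _; rewrite hC linear_sum.
apply: eq_bigr => j _; rewrite linearZ psi_part_rcons ffun_init_rcons ffun_last_rcons.
have aK : (a < K.+1)%N by exact: leq_trans (ltn_ord a) _.
by rewrite !inordK // inord_val.
Qed.

End Step.

Lemma psi_part_basis M K k : (M.+1 < n)%N -> (k <= K)%N ->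
  is_basis (Pk M.+1 k) (Jsum K M.+1 k) (@psi_part M K).
Proof.
elim: M k => [|M IH] k M_lt kK; first exact: (psi_part_basis0 (ltnW M_lt) kK).
have IHk k' : (k' <= K)%N -> is_basis (Pk M.+1 k') (Jsum K M.+1 k') (@psi_part M K).
  by move=> k'K; apply: IH => //; exact: ltnW.
split; first exact: (psi_part_in M_lt IHk kK).
by split; [exact: (psi_part_free M_lt IHk kK)|exact: (psi_part_span M_lt IHk kK)].
Qed.

End Psi.

Theorem theorem3p3 (R : realFieldType) (n k : nat) (nu : 'I_n -> R) :
  (2 <= n)%N -> (forall i, 0 < nu i) ->
  (* every psi_j lies in H_k(R^n) *)
  (forall j, j \in Jset n k -> psi nu (jfun j) \in @Hk R n k) /\
  (* the family (psi_j)_{j in J} is linearly independent *)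
  (forall c : {ffun 'I_n.-1 -> 'I_k.+1} -> R,
      \sum_(j in Jset n k) c j *: psi nu (jfun j) = 0 ->
      forall j, j \in Jset n k -> c j = 0) /\
  (* and spans H_k(R^n) *)
  (forall p : {mpoly R[n]}, p \in @Hk R n k ->
      exists c : {ffun 'I_n.-1 -> 'I_k.+1} -> R,
        p = \sum_(j in Jset n k) c j *: psi nu (jfun j)).
Proof.
case: n nu => [|[|n]] nu n_ge2 nu_gt0 //.
pose e : 'I_n.+2 := ord_max.
have B := psi_part_basis nu_gt0 (ltnSn n.+1) (leqnn k).
have CK_Hk : {in Pk n.+1 k, forall p, CK e.+1 p \in @Hk R n.+2 k}.
  by move=> p /(@CK_harmonic _ _ e); rewrite Hk_harmonic.
have Hk_CK : {in @Hk R n.+2 k, forall q, exists2 p, p \in Pk n.+1 k & q = CK e.+1 p}.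
  by move=> q; rewrite Hk_harmonic => /(@harmonic_CK _ _ e).
(* [psi] is stated with [n.+2 - 2], which is not convertible to [n]. *)
have psiE j : CK e.+1 (psi_part nu j) = psi nu (@jfun n.+2 k j) by rewrite /psi subn2.
change (is_basis (@Hk R n.+2 k) (Jset n.+2 k) (fun j => psi nu (jfun j))).
exact: eq_is_basis psiE (is_basis_linear (@CK_inj _ _ e) CK_Hk Hk_CK B).
Qed.
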